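(* Let $(q_l)_{l\ge1}$ be positive numbers with $q_1=1$ and $0<R:=\lim_{l\to\infty}q_l/q_{l+1}<\infty$, and assume (EQ): $\tilde f(1)>1$, or $\tilde f(1)=1$ and $\tilde g(1)<\infty$. Let $\rho^*>0$, let $\mu^*\in(0,1]$ be the unique solution of $\tilde f(\mu^* )=1$, and let $z^*_l=N^*\tilde q_l(\mu^* )^l$ with $N^*=\rho^*/\tilde g(\mu^* )$. Then every $z\in X_{0+}$ with $\rho(z)=\rho^*$ satisfies $$\tilde A(z)\ \ge\ \rho^*\ln\mu^*=\tilde A(z^* ).$$
   Context: $X=\{z=(z_l)_{l\ge1}:\sum_l l|z_l|<\infty\}$, $X_{0+}$ its nonnegative elements, $\rho(z)=\sum_l lz_l$, $N(z)=\sum_l z_l$. $\tilde q_l=q_lR^l$, $\tilde f(\mu)=\sum_{l\ge1}\tilde q_l\mu^l$, $\tilde g(\mu)=\sum_{l\ge1}l\tilde q_l\mu^l$, $\tilde f(1)=\sum_l\tilde q_l\in(0,\infty]$, $\tilde g(1)=\sum_l l\tilde q_l\in(0,\infty]$. For $z\in X_{0+}\setminus\{0\}$, $\tilde A(z)=\sum_l z_l\ln\big(z_l/(\tilde q_lN(z))\big)$ with $0\ln0=0$, and $\tilde A(0)=0$. *)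

From Stdlib Require Import Reals.
From Coquelicot Require Import Coquelicot.
Open Scope R_scope.

(* Sequences are functions nat -> R; only indices l >= 1 are meaningful,
   index 0 is ignored everywhere. *)

(* Extended-real value of sum_{l>=1} a_l, as the limit of partial sums
   (for nonnegative terms this is the sum in [0, +oo]). *)
Definition sum1 (a : nat -> R) : Rbar :=
  Lim_seq (fun n => sum_n (fun k => a (S k)) n).

Definition qt (q : nat -> R) (Rr : R) (l : nat) : R := q l * Rr ^ l.

Definition ft (q : nat -> R) (Rr mu : R) : Rbar :=
  sum1 (fun l => qt q Rr l * mu ^ l).
Definition gt (q : nat -> R) (Rr mu : R) : Rbar :=
  sum1 (fun l => INR l * qt q Rr l * mu ^ l).

Definition inX0 (z : nat -> R) : Prop :=
  (forall l : nat, (1 <= l)%nat -> 0 <= z l) /\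
  ex_series (fun k => INR (S k) * Rabs (z (S k))).

Definition rho (z : nat -> R) : R := Series (fun k => INR (S k) * z (S k)).
Definition Nz (z : nat -> R) : R := Series (fun k => z (S k)).

(* A~(z) = sum_l z_l ln(z_l / (q~_l N(z))), with 0 ln 0 = 0.
   Terms with z_l = 0 are 0 * (...) = 0 automatically, and for z = 0 every
   term vanishes, so A~(0) = 0 as required. *)
Definition Atilde (q : nat -> R) (Rr : R) (z : nat -> R) : Rbar :=
  sum1 (fun l => z l * ln (z l / (qt q Rr l * Nz z))).

From Stdlib Require Import Reals Lra Lia.
From Coquelicot Require Import Coquelicot.
Open Scope R_scope.

(* Put w_l = q~_l mu*^l, a probability vector as f~ = 1 at mu*, and N = N(z) > 0.
   Then z_l ln (z_l / (q~_l N)) = z_l ln (z_l / (N w_l)) + l z_l ln mu*.  The second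
   parts sum to rho* ln mu*; by ln x <= x - 1 the first parts dominate z_l - N w_l,
   whose sum is N - N = 0.  At z = z* = N* w the first parts vanish, and the bound is
   attained because g~ is finite at mu*: by the ratio test when mu* < 1, by (EQ) when
   mu* = 1. *)

Section NonnegSeries.

Variable a : nat -> R.
Hypothesis a_ge0 : forall k, 0 <= a k.

Lemma sum_n_le_succ n : sum_n a n <= sum_n a (S n).
Proof.
  rewrite sum_Sn; change (sum_n a n <= sum_n a n + a (S n)).
  generalize (a_ge0 (S n)); lra.
Qed.

Lemma sum_n_ge0 n : 0 <= sum_n a n.
Proof.
  induction n as [|n IH].
  - rewrite sum_O; apply a_ge0.
  - generalize (sum_n_le_succ n); lra.
Qed.

Lemma is_series_ge_term L n : is_series a L -> a n <= L.
Proof.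
  intros HL.
  apply Rle_trans with (sum_n a n).
  - destruct n as [|n]; [rewrite sum_O; lra|].
    rewrite sum_Sn; change (a (S n) <= sum_n a n + a (S n)).
    generalize (sum_n_ge0 n); lra.
  - exact (is_lim_seq_incr_compare _ _ HL sum_n_le_succ n).
Qed.

Lemma is_series_of_Lim_seq L : Lim_seq (sum_n a) = Finite L -> is_series a L.
Proof.
  intros HL.
  generalize (Lim_seq_correct _ (ex_lim_seq_incr _ sum_n_le_succ)).
  now rewrite HL.
Qed.

Lemma Lim_seq_sum_n_plus_ge (h : nat -> R) L :
  is_series h L -> Rbar_le L (Lim_seq (sum_n (fun k => a k + h k))).
Proof.
  intros Hh.
  rewrite <- (is_lim_seq_unique (sum_n h) L Hh).
  apply Lim_seq_le_loc; exists 0%nat; intros n _.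
  change (sum_n h n <= sum_n (fun k => plus (a k) (h k)) n).
  rewrite sum_n_plus; change (sum_n h n <= sum_n a n + sum_n h n).
  generalize (sum_n_ge0 n); lra.
Qed.

End NonnegSeries.

Lemma is_series_of_sum1 (a : nat -> R) L :
  (forall l, (1 <= l)%nat -> 0 <= a l) -> sum1 a = Finite L ->
  is_series (fun k => a (S k)) L.
Proof. intros Ha; apply is_series_of_Lim_seq; intro k; apply Ha; lia. Qed.

Lemma sum1_of_is_series (a : nat -> R) L :
  is_series (fun k => a (S k)) L -> sum1 a = Finite L.
Proof. intros HL; exact (is_lim_seq_unique _ L HL). Qed.

Lemma ln_le_sub_1 x : 0 < x -> ln x <= x - 1.
Proof.
  intros Hx; rewrite <- (ln_exp (x - 1)).
  apply ln_le; [exact Hx|].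
  generalize (exp_ineq1_le (x - 1)); lra.
Qed.

Lemma sub_le_mul_ln_div x y : 0 <= x -> 0 < y -> x - y <= x * ln (x / y).
Proof.
  intros [Hx|<-] Hy; [|unfold Rdiv; rewrite !Rmult_0_l; lra].
  assert (Hyx : ln (y / x) <= y / x - 1) by (apply ln_le_sub_1, Rdiv_lt_0_compat; lra).
  assert (Hinv : ln (x / y) = - ln (y / x)).
  { rewrite <- ln_Rinv by (apply Rdiv_lt_0_compat; lra). f_equal; field; lra. }
  rewrite Hinv.
  apply Rmult_le_compat_l with (r := x) in Hyx; [|lra].
  replace (x * (y / x - 1)) with (y - x) in Hyx by (field; lra).
  lra.
Qed.

Section InX0.

Variable z : nat -> R.
Hypothesis hz : inX0 z.

Let z_ge0 k : 0 <= z (S k).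
Proof. apply (proj1 hz); lia. Qed.

Lemma inX0_is_series_rho : is_series (fun k => INR (S k) * z (S k)) (rho z).
Proof.
  apply Series_correct.
  apply ex_series_ext with (fun k => INR (S k) * Rabs (z (S k))); [|exact (proj2 hz)].
  intro k; rewrite Rabs_right; [reflexivity|apply Rle_ge, z_ge0].
Qed.

Lemma inX0_is_series_Nz : is_series (fun k => z (S k)) (Nz z).
Proof.
  apply Series_correct.
  apply (@ex_series_le R_AbsRing R_CompleteNormedModule) with
    (fun k => INR (S k) * Rabs (z (S k))); [|exact (proj2 hz)].
  intro k; change (Rabs (z (S k)) <= INR (S k) * Rabs (z (S k))).
  rewrite S_INR; generalize (pos_INR k) (Rabs_pos (z (S k))); nra.
Qed.

Lemma inX0_Nz_pos : 0 < rho z -> 0 < Nz z.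
Proof.
  intros Hrho.
  destruct (Rlt_or_le 0 (Nz z)) as [HN|HN]; [exact HN|exfalso].
  assert (Hzero : forall k, z (S k) = 0).
  { intro k; generalize (is_series_ge_term _ z_ge0 _ k inX0_is_series_Nz) (z_ge0 k); lra. }
  assert (Hrho0 : rho z = 0 * Nz z).
  { unfold rho, Nz; rewrite <- Series_scal_l.
    apply Series_ext; intro k; rewrite Hzero; ring. }
  lra.
Qed.

End InX0.

Section TiltedWeights.

Variables (q : nat -> R) (Rr mu : R).
Hypotheses (hqpos : forall l, (1 <= l)%nat -> 0 < q l) (hRpos : 0 < Rr) (hmu : 0 < mu).

Lemma qt_pos l : (1 <= l)%nat -> 0 < qt q Rr l.
Proof. intros Hl; apply Rmult_lt_0_compat; [now apply hqpos | now apply pow_lt]. Qed.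

Let gt_term k := INR (S k) * qt q Rr (S k) * mu ^ S k.

Let gt_term_pos k : 0 < gt_term k.
Proof.
  apply Rmult_lt_0_compat; [apply Rmult_lt_0_compat|now apply pow_lt].
  - apply lt_0_INR; lia.
  - apply qt_pos; lia.
Qed.

Lemma gt_term_ratio k :
  gt_term (S k) / gt_term k = (1 + / INR (S k)) * / (q (S k) / q (S (S k))) * (Rr * mu).
Proof.
  assert (Hq1 : 0 < q (S k)) by (apply hqpos; lia).
  assert (Hq2 : 0 < q (S (S k))) by (apply hqpos; lia).
  assert (Hk : 0 < INR (S k)) by (apply lt_0_INR; lia).
  assert (HRk : Rr ^ S k <> 0) by (apply pow_nonzero; lra).
  assert (Hmuk : mu ^ S k <> 0) by (apply pow_nonzero; lra).
  unfold gt_term, qt; rewrite (S_INR (S k)).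
  change (Rr ^ S (S k)) with (Rr * Rr ^ S k); change (mu ^ S (S k)) with (mu * mu ^ S k).
  field; repeat split; lra.
Qed.

Lemma ex_series_gt_lt1 :
  is_lim_seq (fun l => q l / q (S l)) Rr -> mu < 1 -> ex_series gt_term.
Proof.
  intros hR hmu1.
  apply ex_series_ext with (fun k => Rabs (gt_term k)).
  { intro k; apply Rabs_right, Rle_ge, Rlt_le, gt_term_pos. }
  apply ex_series_DAlembert with mu; [exact hmu1 | intro k; generalize (gt_term_pos k); lra |].
  assert (Hinv_n : is_lim_seq (fun k => / INR (S k)) 0).
  { apply (is_lim_seq_inv _ p_infty); [|discriminate].
    exact (proj1 (is_lim_seq_incr_1 INR p_infty) is_lim_seq_INR). }
  assert (Hinv_R : is_lim_seq (fun k => / (q (S k) / q (S (S k)))) (/ Rr)).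
  { apply (is_lim_seq_inv _ Rr); [|intro E; injection E; lra].
    exact (proj1 (is_lim_seq_incr_1 (fun l => q l / q (S l)) Rr) hR). }
  replace mu with ((1 + 0) * / Rr * (Rr * mu)) by (field; lra).
  apply is_lim_seq_ext with (fun k => (1 + / INR (S k)) * / (q (S k) / q (S (S k))) * (Rr * mu)).
  { intro k; rewrite <- gt_term_ratio, Rabs_right; [reflexivity|].
    apply Rle_ge, Rlt_le, Rdiv_lt_0_compat; apply gt_term_pos. }
  apply is_lim_seq_mult'; [|apply is_lim_seq_const].
  apply is_lim_seq_mult'; [|exact Hinv_R].
  exact (is_lim_seq_plus' _ _ _ _ (is_lim_seq_const 1) Hinv_n).
Qed.

Lemma is_series_ft (F : R) :
  ft q Rr mu = Finite F -> is_series (fun k => qt q Rr (S k) * mu ^ S k) F.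
Proof.
  apply is_series_of_sum1; intros l Hl.
  apply Rlt_le, Rmult_lt_0_compat; [now apply qt_pos | now apply pow_lt].
Qed.

Lemma ln_qt_div z N k : 0 < z -> 0 < N ->
  ln (z / (qt q Rr (S k) * N))
  = ln (z / (N * (qt q Rr (S k) * mu ^ S k))) + INR (S k) * ln mu.
Proof.
  intros Hz HN.
  assert (Hq : 0 < qt q Rr (S k)) by (apply qt_pos; lia).
  assert (Hmuk : 0 < mu ^ S k) by now apply pow_lt.
  assert (Hd : 0 < z / (N * (qt q Rr (S k) * mu ^ S k))).
  { apply Rdiv_lt_0_compat, Rmult_lt_0_compat, Rmult_lt_0_compat; assumption. }
  rewrite <- ln_pow, <- ln_mult by (assumption || lra).
  f_equal; field; lra.
Qed.

Lemma Atilde_ge_rho_ln (z : nat -> R) :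
  ft q Rr mu = Finite 1 -> inX0 z -> 0 < rho z ->
  Rbar_le (rho z * ln mu) (Atilde q Rr z).
Proof.
  intros hf hz hrho.
  set (N := Nz z); set (w := fun k => qt q Rr (S k) * mu ^ S k).
  assert (Hw : is_series w 1) by now apply is_series_ft.
  assert (Hw_pos : forall k, 0 < w k).
  { intro k; apply Rmult_lt_0_compat; [apply qt_pos; lia | now apply pow_lt]. }
  assert (HN : 0 < N) by now apply inX0_Nz_pos.
  assert (Hz : forall k, 0 <= z (S k)) by (intro k; apply (proj1 hz); lia).
  set (e := fun k => z (S k) * ln (z (S k) / (N * w k)) - z (S k) + N * w k).
  set (h := fun k => INR (S k) * z (S k) * ln mu + z (S k) - N * w k).
  assert (He : forall k, 0 <= e k).
  { intro k; assert (HNw : 0 < N * w k) by (apply Rmult_lt_0_compat; auto).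
    generalize (sub_le_mul_ln_div (z (S k)) (N * w k) (Hz k) HNw); unfold e; lra. }
  assert (Hh : is_series h (rho z * ln mu + N - N * 1)).
  { exact (is_series_minus _ _ _ _
      (is_series_plus _ _ _ _
        (is_series_scal_r (ln mu) _ _ (inX0_is_series_rho z hz))
        (inX0_is_series_Nz z hz))
      (is_series_scal_l N _ _ Hw)). }
  assert (Hsplit : forall k, z (S k) * ln (z (S k) / (qt q Rr (S k) * N)) = e k + h k).
  { intro k; unfold e, h.
    destruct (Hz k) as [Hzk | <-]; [|ring].
    rewrite ln_qt_div by assumption; unfold w; ring. }
  replace (rho z * ln mu) with (rho z * ln mu + N - N * 1) by ring.
  unfold Atilde, sum1.
  rewrite (Lim_seq_ext _ (sum_n (fun k => e k + h k))).
  - exact (Lim_seq_sum_n_plus_ge e He h _ Hh).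
  - intro n; apply sum_n_ext; intro k; apply Hsplit.
Qed.

Lemma is_finite_gt :
  is_lim_seq (fun l => q l / q (S l)) Rr -> mu <= 1 -> ft q Rr mu = Finite 1 ->
  Rbar_lt (Finite 1) (ft q Rr 1) \/ (ft q Rr 1 = Finite 1 /\ is_finite (gt q Rr 1)) ->
  is_finite (gt q Rr mu).
Proof.
  intros hR hmu1 hf hEQ.
  destruct (Rlt_or_le mu 1) as [hlt | hge].
  - destruct (ex_series_gt_lt1 hR hlt) as [G HG].
    unfold is_finite, gt.
    rewrite (sum1_of_is_series (fun l => INR l * qt q Rr l * mu ^ l) G HG); reflexivity.
  - assert (Hmu1 : mu = 1) by lra.
    rewrite Hmu1 in hf |- *.
    destruct hEQ as [hlt | [_ hfin]]; [|exact hfin].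
    rewrite hf in hlt; simpl in hlt; lra.
Qed.

Lemma is_series_gt G : gt q Rr mu = Finite G -> is_series gt_term G.
Proof.
  apply (is_series_of_sum1 (fun l => INR l * qt q Rr l * mu ^ l)).
  intros l Hl; apply Rlt_le, Rmult_lt_0_compat; [apply Rmult_lt_0_compat|now apply pow_lt].
  - apply lt_0_INR; lia.
  - now apply qt_pos.
Qed.

Lemma gt_pos G : gt q Rr mu = Finite G -> 0 < G.
Proof.
  intros HG.
  apply Rlt_le_trans with (gt_term 0); [apply gt_term_pos|].
  apply is_series_ge_term; [intro k; apply Rlt_le, gt_term_pos | now apply is_series_gt].
Qed.

Lemma Nz_scaled_weights c :
  ft q Rr mu = Finite 1 -> Nz (fun l => c * qt q Rr l * mu ^ l) = c.
Proof.
  intros hf; unfold Nz.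
  rewrite (Series_ext _ (fun k => c * (qt q Rr (S k) * mu ^ S k))) by (intro k; ring).
  rewrite Series_scal_l, (is_series_unique _ _ (is_series_ft 1 hf)); ring.
Qed.

Lemma Atilde_scaled_weights c G :
  0 < c -> ft q Rr mu = Finite 1 -> gt q Rr mu = Finite G ->
  Atilde q Rr (fun l => c * qt q Rr l * mu ^ l) = Finite (c * G * ln mu).
Proof.
  intros hc hf HG.
  apply sum1_of_is_series.
  rewrite (Nz_scaled_weights c hf).
  assert (Hterm : forall k,
    c * ln mu * gt_term k = c * qt q Rr (S k) * mu ^ S k * ln (mu ^ S k)).
  { intro k; rewrite ln_pow by exact hmu; unfold gt_term; ring. }
  replace (c * G * ln mu) with (c * ln mu * G) by ring.
  apply is_series_ext with (fun k => c * ln mu * gt_term k);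
    [|exact (is_series_scal_l (c * ln mu) _ _ (is_series_gt G HG))].
  intro k; rewrite Hterm; f_equal; f_equal.
  assert (Hq : 0 < qt q Rr (S k)) by (apply qt_pos; lia).
  field; lra.
Qed.

End TiltedWeights.

Theorem corollary11 (q : nat -> R) (Rr rhos mus : R)
  (hqpos : forall l : nat, (1 <= l)%nat -> 0 < q l)
  (hq1 : q 1%nat = 1)
  (hR : is_lim_seq (fun l => q l / q (S l)) (Finite Rr))
  (hRpos : 0 < Rr)
  (hEQ : Rbar_lt (Finite 1) (ft q Rr 1)
         \/ (ft q Rr 1 = Finite 1 /\ is_finite (gt q Rr 1)))
  (hrho : 0 < rhos)
  (hmu : 0 < mus <= 1)
  (hfmu : ft q Rr mus = Finite 1) :
  let Ns := rhos / real (gt q Rr mus) in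
  let zs := fun l : nat => Ns * qt q Rr l * mus ^ l in
  (forall z : nat -> R, inX0 z -> rho z = rhos ->
     Rbar_le (Finite (rhos * ln mus)) (Atilde q Rr z))
  /\ Atilde q Rr zs = Finite (rhos * ln mus).
Proof.
  intros Ns zs.
  destruct hmu as [hmu0 hmu1].
  set (G := real (gt q Rr mus)).
  assert (HG : gt q Rr mus = Finite G)
    by exact (eq_sym (is_finite_gt q Rr mus hqpos hRpos hmu0 hR hmu1 hfmu hEQ)).
  assert (HGpos : 0 < G) by exact (gt_pos q Rr mus hqpos hRpos hmu0 G HG).
  split.
  - intros z hz hrz; rewrite <- hrz.
    apply (Atilde_ge_rho_ln q Rr mus hqpos hRpos hmu0 z hfmu hz); lra.
  - unfold zs, Ns; fold G.
    rewrite (Atilde_scaled_weights q Rr mus hqpos hRpos hmu0 (rhos / G) G); try assumption.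
    + f_equal; field; lra.
    + apply Rdiv_lt_0_compat; assumption.
Qed.
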